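(* Let $X$ be a topological space and $x\in X$. Then $nu(X)\ge\left|\bigcup\{M: M$ is a maximal finitely non-Hausdorff subset of $X$ with $x\in M\}\right|$.
   Context: A non-empty subset $A$ of $X$ is finitely non-Hausdorff if for every non-empty finite $F\subseteq A$ and every family $\{U_y:y\in F\}$ of open neighborhoods $U_y$ of $y$, $\bigcap_{y\in F}U_y\neq\emptyset$; it is maximal finitely non-Hausdorff if no finitely non-Hausdorff subset of $X$ properly contains it. $A$ is finitely non-Urysohn if instead $\bigcap_{y\in F}\overline{U_y}\neq\emptyset$ for all such $F$ and families. The non-Urysohn number is $nu(X):=1+\sup\{|A|:A\subseteq X$ finitely non-Urysohn$\}$. *)

From HB Require Import structures.
From mathcomp Require Import all_boot all_order all_algebra.
From mathcomp Require Import all_classical all_reals all_analysis.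
Set Implicit Arguments. Unset Strict Implicit. Unset Printing Implicit Defensive.
Local Open Scope classical_set_scope.
Local Open Scope card_scope.

Definition fin_nonHausdorff (X : topologicalType) (A : set X) : Prop :=
  A !=set0 /\
  forall (F : set X) (U : X -> set X),
    finite_set F -> F !=set0 -> F `<=` A ->
    (forall y, F y -> open (U y) /\ U y y) ->
    \bigcap_(y in F) U y !=set0.

Definition max_fin_nonHausdorff (X : topologicalType) (M : set X) : Prop :=
  fin_nonHausdorff M /\
  forall B : set X, fin_nonHausdorff B -> M `<=` B -> B = M.

Definition fin_nonUrysohn (X : topologicalType) (A : set X) : Prop :=
  A !=set0 /\
  forall (F : set X) (U : X -> set X),
    finite_set F -> F !=set0 -> F `<=` A ->
    (forall y, F y -> open (U y) /\ U y y) ->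
    \bigcap_(y in F) closure (U y) !=set0.

(* Cardinal 1 + |A|, realised as the subset {None} ∪ Some(A) of option X. *)
Definition one_plus (X : Type) (A : set X) : set (option X) :=
  [set None] `|` (Some @` A).

(* The cardinal represented by C (a set in an arbitrary type) is an upper
   bound of nu(X) = 1 + sup{|A| : A finitely non-Urysohn}.
   Since the family is nonempty (singletons are finitely non-Urysohn),
   1 + sup S = sup {1 + s : s ∈ S}, so this holds iff 1 + |A| <= |C|
   for every finitely non-Urysohn A. *)
Definition nu_le (X : topologicalType) (L : Type) (C : set L) : Prop :=
  forall A : set X, fin_nonUrysohn A -> one_plus A #<= C.

(* |B| <= nu(X): |B| is below every upper bound of nu(X), i.e. below the
   least one, which is nu(X) itself. *)
Definition card_le_nu (X : topologicalType) (Y : Type) (B : set Y) : Prop :=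
  forall (L : Type) (C : set L), nu_le X C -> B #<= C.

(* If x and y lie in a common finitely non-Hausdorff set, applying the
   definition to the pair {x, y} shows that every neighbourhood of x meets
   every open neighbourhood U of y, i.e. x lies in the closure of U.  So for
   the union of all such sets through x, the point x itself lies in every
   intersection of closures of neighbourhoods: the union is finitely
   non-Urysohn, and its cardinal is at most 1 + its cardinal <= nu(X). *)
From mathcomp Require Import all_boot all_order all_algebra.
From mathcomp Require Import all_classical all_reals all_analysis.
Local Open Scope classical_set_scope.

Lemma fin_nonHausdorff_closure (X : topologicalType) (M U : set X) (x y : X) :
  fin_nonHausdorff M -> M x -> M y -> open U -> U y -> closure U x.
Proof.
move=> [_ sepM] Mx My oU Uy B; rewrite nbhsE => -[V [oV Vx] VB].
have [exy|nxy] := eqVneq x y; first by exists x; split; [rewrite exy | apply: VB].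
pose W z := if z == y then U else V.
have WE : (W y = U) * (W x = V) by rewrite /W eqxx (negbTE nxy).
have [z Wz] : \bigcap_(z in [set x; y]) W z !=set0.
  apply: sepM; first exact: finite_set2.
  - by exists x; left.
  - by move=> z [->|->].
  - by move=> z [->|->]; rewrite WE.
have := Wz y (or_intror erefl); have := Wz x (or_introl erefl).
by rewrite !WE => Vz Uz; exists z; split => //; apply: VB.
Qed.

Lemma bigcup_fin_nonHausdorff_nonUrysohn (X : topologicalType) (x : X)
    (I : set (set X)) :
  (forall M, I M -> fin_nonHausdorff M /\ M x) -> I !=set0 ->
  fin_nonUrysohn (\bigcup_(M in I) M).
Proof.
move=> HI [M0 IM0]; split; first by exists x, M0 => //; case: (HI M0 IM0).
move=> F U _ _ FI oU; exists x => y Fy.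
have [M IM My] := FI y Fy; have [HM Mx] := HI M IM; have [oUy Uyy] := oU y Fy.
exact: fin_nonHausdorff_closure HM Mx My oUy Uyy.
Qed.

Lemma fin_nonUrysohn_card_le_nu (X : topologicalType) (A : set X) :
  fin_nonUrysohn A -> card_le_nu X A.
Proof.
move=> NUA L C leC; apply: card_le_trans (leC A NUA).
rewrite -card_ge_some; apply: subset_card_le => z Az; by right.
Qed.

Theorem corollary2p18 (X : topologicalType) (x : X) :
  card_le_nu X (\bigcup_(M in [set M : set X | max_fin_nonHausdorff M /\ M x]) M).
Proof.
set I := [set M : set X | _].
have [->|neI] := eqVneq I set0; first by rewrite bigcup_set0 => L C _; exact: card_ge0.
apply: fin_nonUrysohn_card_le_nu; apply: (bigcup_fin_nonHausdorff_nonUrysohn _ x).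
  by move=> M [[]].
exact/set0P.
Qed.
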